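(* Let $\Lambda$ be a locally finite $k$-graph with no sources or sinks, and let $\alpha$ be an action of $\mathbb{Z}^l$ on $\Lambda$ by automorphisms. Then $\Lambda$ is $\alpha$-cofinal if and only if $\tau^{\sigma,\alpha}$ is irreducible.
   Context: A $k$-graph is a countable category $\Lambda$ with a functor $d:\Lambda\to\mathbb{N}^k$ with unique factorisation; vertices are degree-$0$ morphisms; $v\Lambda w=\{\lambda:r(\lambda)=v,s(\lambda)=w\}$. Locally finite with no sources or sinks: for each $p$ and vertex $v$, $v\Lambda^p$ and $\Lambda^pv$ are finite and nonempty. An automorphism is a bijective degree-preserving functor. $\Lambda^\infty$ is the set of degree-preserving functors $x:\Omega_k\to\Lambda$ ($\Omega_k=\{(a,b)\in\mathbb{N}^k\times\mathbb{N}^k:a\le b\}$, $r(a,b)=(a,a)$, $s(a,b)=(b,b)$, $(a,b)(b,c)=(a,c)$, $d(a,b)=b-a$), topologised by cylinder sets $\lambda\Lambda^\infty=\{x:x(0,d(\lambda))=\lambda\}$; $x(p):=x(p,p)$; $\sigma^p(x)(0,n)=x(p,p+n)$; $\phi^\infty(x)(0,n)=\phi(x(0,n))$. $\tau^{\sigma,\alpha}_{(p,m)}=\sigma^p\circ\alpha^\infty_{-m}$, an action of $\mathbb{N}^k\times\mathbb{N}^l$ on $\Lambda^\infty$. Points $x,y$ are trajectory equivalent if $\tau^{\sigma,\alpha}_s(x)=\tau^{\sigma,\alpha}_t(y)$ for some $s,t$; $W$ is invariant if it contains every point trajectory equivalent to one of its points; $\tau^{\sigma,\alpha}$ is irreducible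 if the only open invariant subsets of $\Lambda^\infty$ are $\emptyset$ and $\Lambda^\infty$. $\Lambda$ is $\alpha$-cofinal if for every vertex $v$ and $x\in\Lambda^\infty$ there exist $p\in\mathbb{N}^k$ and $m,n\in\mathbb{N}^l$ with $\alpha_{-m}(v)\Lambda\alpha_{-n}(x(p))\ne\emptyset$. *)

From mathcomp Require Import all_boot all_order all_algebra.
Set Implicit Arguments. Unset Strict Implicit. Unset Printing Implicit Defensive.
Import GRing.Theory Num.Theory.

Definition NN (k : nat) := {ffun 'I_k -> nat}.
Definition ZZ (l : nat) := {ffun 'I_l -> int}.

Definition nn0 {k} : NN k := [ffun _ => 0%N].
Definition nnadd {k} (m n : NN k) : NN k := [ffun i => (m i + n i)%N].
Definition nnsub {k} (m n : NN k) : NN k := [ffun i => (m i - n i)%N].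
Definition nnle {k} (m n : NN k) : bool := [forall i, m i <= n i].

Definition zz0 {l} : ZZ l := [ffun _ => 0%R].
Definition zzadd {l} (m n : ZZ l) : ZZ l := [ffun i => (m i + n i)%R].
Definition zzneg {l} (m : NN l) : ZZ l := [ffun i => (- (m i)%:Z)%R].

(* A (small, countable) category given by its arrows: objects are identified
   with identity arrows, r/s give the range/source identity, [kcomp l m] is
   the composite l m (meaningful only when s l = r m).  [kd] is the degree. *)
Record kgraph (k : nat) := KGraph {
  kmor :> countType;
  kr : kmor -> kmor;
  ks : kmor -> kmor;
  kcomp : kmor -> kmor -> kmor;
  kd : kmor -> NN k }.

Definition is_kgraph k (L : kgraph k) : Prop :=
  (forall l : L, kr (kr l) = kr l /\ ks (kr l) = kr l /\ kr (ks l) = ks l /\ ks (ks l) = ks l)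
  /\ (forall l : L, kcomp (kr l) l = l /\ kcomp l (ks l) = l)
  /\ (forall l m : L, ks l = kr m -> kr (kcomp l m) = kr l /\ ks (kcomp l m) = ks m)
  /\ (forall l m n : L, ks l = kr m -> ks m = kr n ->
        kcomp (kcomp l m) n = kcomp l (kcomp m n))
  /\ (forall l m : L, ks l = kr m -> kd (kcomp l m) = nnadd (kd l) (kd m))
  /\ (forall (l : L) (m n : NN k), kd l = nnadd m n ->
        exists mu nu : L,
          (kd mu = m /\ kd nu = n /\ ks mu = kr nu /\ l = kcomp mu nu)
          /\ forall mu' nu' : L,
               kd mu' = m -> kd nu' = n -> ks mu' = kr nu' -> l = kcomp mu' nu' ->
               mu' = mu /\ nu' = nu).

Definition is_vertex k (L : kgraph k) (v : L) : Prop := kd v = nn0.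

Definition locally_finite_no_sources_sinks k (L : kgraph k) : Prop :=
  forall (p : NN k) (v : L), is_vertex v ->
    (exists s : seq L, forall l : L, kr l = v -> kd l = p -> l \in s)
    /\ (exists s : seq L, forall l : L, ks l = v -> kd l = p -> l \in s)
    /\ (exists l : L, kr l = v /\ kd l = p)
    /\ (exists l : L, ks l = v /\ kd l = p).

Definition kg_aut k (L : kgraph k) (phi : L -> L) : Prop :=
  bijective phi
  /\ (forall l : L, kd (phi l) = kd l /\ kr (phi l) = phi (kr l) /\ ks (phi l) = phi (ks l))
  /\ (forall l m : L, ks l = kr m -> phi (kcomp l m) = kcomp (phi l) (phi m)).

Definition is_aut_action k l (L : kgraph k) (alpha : ZZ l -> L -> L) : Prop :=
  (forall z, kg_aut (alpha z))
  /\ (forall x : L, alpha zz0 x = x)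
  /\ (forall z w (x : L), alpha (zzadd z w) x = alpha z (alpha w x)).

(* x a b stands for x(a,b) on Omega_k = {(a,b) | a <= b}; off Omega_k the
   function is normalised to x a b = x a a so that such functions correspond
   bijectively to degree-preserving functors Omega_k -> Lambda. *)
Definition is_inf_path k (L : kgraph k) (x : NN k -> NN k -> L) : Prop :=
  (forall a b, nnle a b ->
     kd (x a b) = nnsub b a /\ kr (x a b) = x a a /\ ks (x a b) = x b b)
  /\ (forall a b c, nnle a b -> nnle b c -> x a c = kcomp (x a b) (x b c))
  /\ (forall a b, ~~ nnle a b -> x a b = x a a).

Definition in_cyl k (L : kgraph k) (lam : L) (x : NN k -> NN k -> L) : Prop :=
  x nn0 (kd lam) = lam.

(* open sets of the topology generated by the cylinder sets *)
Definition is_open_path_set k (L : kgraph k) (W : (NN k -> NN k -> L) -> Prop) : Prop :=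
  forall x, is_inf_path x -> W x ->
    exists ls : seq L,
      (forall lam, lam \in ls -> in_cyl lam x)
      /\ (forall y, is_inf_path y -> (forall lam, lam \in ls -> in_cyl lam y) -> W y).

Definition shift k (L : kgraph k) (p : NN k) (x : NN k -> NN k -> L) : NN k -> NN k -> L :=
  fun a b => x (nnadd a p) (nnadd b p).
Definition alpha_inf k (L : kgraph k) (phi : L -> L) (x : NN k -> NN k -> L) :
  NN k -> NN k -> L := fun a b => phi (x a b).

Definition tau k l (L : kgraph k) (alpha : ZZ l -> L -> L) (p : NN k) (m : NN l)
  (x : NN k -> NN k -> L) : NN k -> NN k -> L :=
  shift p (alpha_inf (alpha (zzneg m)) x).

Definition traj_equiv k l (L : kgraph k) (alpha : ZZ l -> L -> L)
  (x y : NN k -> NN k -> L) : Prop :=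
  exists (p q : NN k) (m n : NN l), tau alpha p m x = tau alpha q n y.

Definition is_invariant k l (L : kgraph k) (alpha : ZZ l -> L -> L)
  (W : (NN k -> NN k -> L) -> Prop) : Prop :=
  forall x y, is_inf_path x -> is_inf_path y -> W x -> traj_equiv alpha x y -> W y.

Definition tau_irreducible k l (L : kgraph k) (alpha : ZZ l -> L -> L) : Prop :=
  forall W : (NN k -> NN k -> L) -> Prop,
    is_open_path_set W -> is_invariant alpha W ->
    (forall x, is_inf_path x -> ~ W x) \/ (forall x, is_inf_path x -> W x).

Definition alpha_cofinal k l (L : kgraph k) (alpha : ZZ l -> L -> L) : Prop :=
  forall (v : L) (x : NN k -> NN k -> L), is_vertex v -> is_inf_path x ->
    exists (p : NN k) (m n : NN l) (lam : L),
      kr lam = alpha (zzneg m) v /\ ks lam = alpha (zzneg n) (x p p).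

From mathcomp Require Import all_boot all_order all_algebra zify.
From Stdlib Require Import ClassicalEpsilon FunctionalExtensionality Classical.
Set Implicit Arguments. Unset Strict Implicit. Unset Printing Implicit Defensive.
Import GRing.Theory.

(* Cofinality gives irreducibility: a nonempty open invariant set contains a
   cylinder [x(0,N) Lambda^infty]; cofinality connects, up to the action, the
   vertex [x(N)] to some vertex [y(p)] of an arbitrary path [y], and prefixing
   the connecting path with [x(0,N)] yields a path in the cylinder that is
   trajectory equivalent to [y].  Conversely, the set of paths that a fixed
   vertex [v] reaches in this sense is open (it is determined by [y(0,p)]) and
   invariant, and it is nonempty because, having no sources, [v] is the range
   of an infinite path; irreducibility then forces it to be everything.
   Infinite paths are built as limits of chains of finite paths, through the
   segments [l(a,b)] given by unique factorisation. *)

Section NNArith.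
Variable k : nat.
Implicit Types a b c p : NN k.

(* Unlike [ffunP], both sides elaborate to the same [fun_of_fin] term, so
   [lia] sees [a i] as a single atom. *)
Lemma nn_ext a b : (forall i, a i = b i) -> a = b.
Proof. by move=> H; apply/ffunP. Qed.

Lemma nnleP a b : reflect (forall i, a i <= b i) (nnle a b).
Proof. exact: forallP. Qed.

Lemma nnaddC a b : nnadd a b = nnadd b a.
Proof. by apply: nn_ext => i; rewrite !ffunE addnC. Qed.

Lemma nnadd0l a : nnadd nn0 a = a.
Proof. by apply: nn_ext => i; rewrite !ffunE. Qed.

Lemma nnsub0 a : nnsub a nn0 = a.
Proof. by apply: nn_ext => i; rewrite !ffunE subn0. Qed.

Lemma nnsubnn a : nnsub a a = nn0.
Proof. by apply: nn_ext => i; rewrite !ffunE subnn. Qed.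

Lemma nnsubDr a b p : nnsub (nnadd b p) (nnadd a p) = nnsub b a.
Proof. by apply: nn_ext => i; rewrite !ffunE subnDr. Qed.

Lemma nnaddI a b c : nnadd a b = nnadd a c -> b = c.
Proof.
move=> E; apply: nn_ext => i.
by have := congr1 (fun f : NN k => f i) E; rewrite !ffunE => /addnI.
Qed.

Lemma nnadd_eq0 a b : nnadd a b = b -> a = nn0.
Proof.
move=> E; apply: nn_ext => i.
by have := congr1 (fun f : NN k => f i) E; rewrite !ffunE; lia.
Qed.

Lemma nnsubKC a b : nnle a b -> nnadd a (nnsub b a) = b.
Proof. by move=> /nnleP H; apply: nn_ext => i; rewrite !ffunE; have := H i; lia. Qed.

Lemma nnle_refl a : nnle a a.
Proof. exact/nnleP. Qed.

Lemma nnle0 a : nnle nn0 a.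
Proof. by apply/nnleP => i; rewrite ffunE. Qed.

Lemma nnle_trans a b c : nnle a b -> nnle b c -> nnle a c.
Proof. by move=> /nnleP H1 /nnleP H2; apply/nnleP => i; apply: leq_trans (H1 i) (H2 i). Qed.

Lemma nnle_addr a b : nnle a (nnadd a b).
Proof. by apply/nnleP => i; rewrite ffunE leq_addr. Qed.

Lemma nnle_addl a b : nnle b (nnadd a b).
Proof. by rewrite nnaddC nnle_addr. Qed.

Lemma nnle_add2r a b p : nnle (nnadd a p) (nnadd b p) = nnle a b.
Proof. by apply/nnleP/nnleP => H i; have := H i; rewrite !ffunE leq_add2r. Qed.

Lemma nnsub_add a b c : nnle a b -> nnle b c ->
  nnsub c a = nnadd (nnsub b a) (nnsub c b).
Proof.
move=> /nnleP H1 /nnleP H2; apply: nn_ext => i; rewrite !ffunE.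
by have := H1 i; have := H2 i; lia.
Qed.

Lemma nnle_bound (s : seq (NN k)) : exists N, forall a, a \in s -> nnle a N.
Proof.
elim: s => [|b s [N HN]]; first by exists nn0.
exists (nnadd b N) => a; rewrite inE => /predU1P [-> | /HN aN].
  exact: nnle_addr.
exact: nnle_trans aN (nnle_addl _ _).
Qed.

Definition nndiag n : NN k := [ffun _ => n].
Definition nnheight a : nat := \max_(i < k) a i.

Lemma nnle_diag_height a : nnle a (nndiag (nnheight a)).
Proof. by apply/nnleP => i; rewrite ffunE; apply: leq_bigmax. Qed.

Lemma nnle_diag m n : m <= n -> nnle (nndiag m) (nndiag n).
Proof. by move=> mn; apply/nnleP => i; rewrite !ffunE. Qed.

Lemma nndiagS n : nnadd (nndiag n) (nndiag 1) = nndiag n.+1.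
Proof. by apply: nn_ext => i; rewrite !ffunE addn1. Qed.

End NNArith.

Section KGraph.
Variables (k : nat) (L : kgraph k).
Hypothesis HK : is_kgraph L.
Implicit Types l m s t : L.

Lemma kr_kr l : kr (kr l) = kr l.
Proof. by case: HK => /(_ l) []. Qed.
Lemma ks_kr l : ks (kr l) = kr l.
Proof. by case: HK => /(_ l) [_ []]. Qed.
Lemma kr_ks l : kr (ks l) = ks l.
Proof. by case: HK => /(_ l) [_ [_ []]]. Qed.
Lemma ks_ks l : ks (ks l) = ks l.
Proof. by case: HK => /(_ l) [_ [_ []]]. Qed.
Lemma kcomp_kr l : kcomp (kr l) l = l.
Proof. by case: HK => _ [/(_ l) []]. Qed.
Lemma kcomp_ks l : kcomp l (ks l) = l.
Proof. by case: HK => _ [/(_ l) []]. Qed.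
Lemma kr_comp l m : ks l = kr m -> kr (kcomp l m) = kr l.
Proof. by case: HK => _ [_ [/(_ l m) H _]] /H []. Qed.
Lemma ks_comp l m : ks l = kr m -> ks (kcomp l m) = ks m.
Proof. by case: HK => _ [_ [/(_ l m) H _]] /H []. Qed.
Lemma kcompA l m t : ks l = kr m -> ks m = kr t ->
  kcomp (kcomp l m) t = kcomp l (kcomp m t).
Proof. by case: HK => _ [_ [_ [H _]]]; apply: H. Qed.
Lemma kd_comp l m : ks l = kr m -> kd (kcomp l m) = nnadd (kd l) (kd m).
Proof. by case: HK => _ [_ [_ [_ [H _]]]]; apply: H. Qed.

Lemma kfactor l (a b : NN k) : kd l = nnadd a b ->
  exists m n, [/\ kd m = a, kd n = b, ks m = kr n & l = kcomp m n].
Proof.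
case: HK => _ [_ [_ [_ [_ H]]]] /H [m [n [[? [? [? ?]]] _]]].
by exists m, n.
Qed.

Lemma kcomp_inj l m l' m' : ks l = kr m -> ks l' = kr m' -> kd l = kd l' ->
  kcomp l m = kcomp l' m' -> l = l' /\ m = m'.
Proof.
move=> c c' dl E; have dlm := kd_comp c.
case: HK => _ [_ [_ [_ [_ /(_ _ _ _ dlm) [l0 [m0 [_ U]]]]]]].
have [-> ->] := U l m erefl erefl c erefl.
have dm : kd m' = kd m by apply: (@nnaddI _ (kd l)); rewrite -dlm dl -kd_comp // E.
by have [-> ->] := U l' m' (esym dl) dm c' E.
Qed.

Lemma kd_kr l : kd (kr l) = nn0.
Proof. by apply: (@nnadd_eq0 _ _ (kd l)); rewrite -kd_comp ?ks_kr // kcomp_kr. Qed.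

Lemma kd_ks l : kd (ks l) = nn0.
Proof.
by apply: (@nnadd_eq0 _ _ (kd l)); rewrite nnaddC -kd_comp ?kr_ks // kcomp_ks.
Qed.

Lemma vertex_kr_ks (v : L) : is_vertex v -> kr v = v /\ ks v = v.
Proof.
move=> dv; have E : kcomp (kr v) v = kcomp v (ks v) by rewrite kcomp_kr kcomp_ks.
have [] := kcomp_inj (ks_kr v) (esym (kr_ks v)) _ E; first by rewrite kd_kr dv.
by move=> -> <-.
Qed.

Definition is_segment l (a b : NN k) s : Prop :=
  exists al be, [/\ ks al = kr s, ks s = kr be, kd al = a, kd s = nnsub b a
                  & l = kcomp al (kcomp s be)].

Lemma is_segment_exists l (a b : NN k) : nnle a b -> nnle b (kd l) ->
  exists s, is_segment l a b s.
Proof.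
move=> ab bl; have al := nnle_trans ab bl.
have [al' [t [dal dt c E]]] := kfactor (esym (nnsubKC al)).
have [s [be [ds dbe c' E']]] := kfactor (b := nnsub (kd l) b) (etrans dt (nnsub_add ab bl)).
exists s, al', be; split => //; last by rewrite E E'.
by rewrite c E' kr_comp.
Qed.

Lemma is_segment_uniq l a b s s' : is_segment l a b s -> is_segment l a b s' -> s = s'.
Proof.
move=> [al [be [c1 c2 d1 d2 E]]] [al' [be' [c1' c2' d1' d2' E']]].
have [_ E2] := kcomp_inj (m := kcomp s be) (m' := kcomp s' be')
  (etrans c1 (esym (kr_comp c2))) (etrans c1' (esym (kr_comp c2')))
  (etrans d1 (esym d1')) (etrans (esym E) E').
by have [] := kcomp_inj c2 c2' (etrans d2 (esym d2')) E2.
Qed.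

(* [seg l a b] is the paper's [l(a, b)]; it is junk unless [a <= b <= d(l)]. *)
Definition seg l (a b : NN k) : L := epsilon (inhabits l) (is_segment l a b).

Lemma segE l a b s : is_segment l a b s -> seg l a b = s.
Proof.
move=> Hs; apply: (is_segment_uniq _ Hs).
exact: (epsilon_spec (inhabits l) (is_segment l a b) (ex_intro _ s Hs)).
Qed.

Lemma is_segment_vertex l a b s : nnle a b ->
  is_segment l a b s -> is_segment l a a (kr s) /\ is_segment l b b (ks s).
Proof.
move=> ab [al [be [c1 c2 d1 d2 E]]]; split.
  exists al, (kcomp s be); split; rewrite ?kr_kr ?ks_kr ?kd_kr ?nnsubnn //.
  - by rewrite kr_comp.
  - by rewrite -{1}(kr_comp c2) kcomp_kr.
exists (kcomp al s), be; split; rewrite ?kr_ks ?ks_comp ?kd_ks ?nnsubnn //.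
- by rewrite ks_ks.
- by rewrite kd_comp // d1 d2 nnsubKC.
- by rewrite c2 kcomp_kr kcompA.
Qed.

Lemma is_segment_split l a b c s s1 s2 : nnle a b -> nnle b c ->
  is_segment l a c s -> ks s1 = kr s2 -> kd s1 = nnsub b a -> s = kcomp s1 s2 ->
  is_segment l a b s1 /\ is_segment l b c s2.
Proof.
move=> ab bc [al [be [c1 c2 d1 d2 E]]] c12 ds1 Es.
have c1' : ks al = kr s1 by rewrite c1 Es kr_comp.
have c2' : ks s2 = kr be by rewrite -c2 Es ks_comp.
have ds2 : kd s2 = nnsub c b.
  by apply: (@nnaddI _ (kd s1)); rewrite -kd_comp // -Es d2 ds1 -nnsub_add.
split.
  exists al, (kcomp s2 be); split; rewrite ?kr_comp //.
  by rewrite E Es kcompA.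
exists (kcomp al s1), be; split; rewrite ?ks_comp //.
- by rewrite kd_comp // d1 ds1 nnsubKC.
- by rewrite E Es !kcompA ?kr_comp.
Qed.

Section Segments.
Variables (l : L) (a b : NN k).
Hypotheses (ab : nnle a b) (bl : nnle b (kd l)).

Lemma seg_is_segment : is_segment l a b (seg l a b).
Proof. by have [s Hs] := is_segment_exists ab bl; rewrite (segE Hs). Qed.

Lemma seg_kd : kd (seg l a b) = nnsub b a.
Proof. by have [al [be []]] := seg_is_segment. Qed.

Lemma seg_kr : kr (seg l a b) = seg l a a.
Proof. by have [/segE -> _] := is_segment_vertex ab seg_is_segment. Qed.

Lemma seg_ks : ks (seg l a b) = seg l b b.
Proof. by have [_ /segE ->] := is_segment_vertex ab seg_is_segment. Qed.

Lemma seg_compr t : ks l = kr t -> seg (kcomp l t) a b = seg l a b.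
Proof.
have [al [be [c1 c2 d1 d2 E]]] := seg_is_segment.
move=> clt; have cbe : ks be = kr t by rewrite -clt E !ks_comp ?kr_comp.
apply: segE; exists al, (kcomp be t); split; rewrite ?kr_comp //.
by rewrite {1}E kcompA ?kcompA ?kr_comp ?ks_comp.
Qed.

End Segments.

Lemma seg_comp l a b c : nnle a b -> nnle b c -> nnle c (kd l) ->
  seg l a c = kcomp (seg l a b) (seg l b c).
Proof.
move=> ab bc cl; have Hs := seg_is_segment (nnle_trans ab bc) cl.
have [s1 [s2 [ds1 _ c12 Es]]] :=
  kfactor (etrans (seg_kd (nnle_trans ab bc) cl) (nnsub_add ab bc)).
have [/segE -> /segE ->] := is_segment_split ab bc Hs c12 ds1 Es.
exact: Es.
Qed.

Section InfPath.
Variable x : NN k -> NN k -> L.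
Hypothesis Px : is_inf_path x.

Lemma path_kd a b : nnle a b -> kd (x a b) = nnsub b a.
Proof. by case: Px => /(_ a b) H _ /H [? [? ?]]. Qed.
Lemma path_kr a b : nnle a b -> kr (x a b) = x a a.
Proof. by case: Px => /(_ a b) H _ /H [? [? ?]]. Qed.
Lemma path_ks a b : nnle a b -> ks (x a b) = x b b.
Proof. by case: Px => /(_ a b) H _ /H [? [? ?]]. Qed.
Lemma path_comp a b c : nnle a b -> nnle b c -> x a c = kcomp (x a b) (x b c).
Proof. by case: Px => _ [H _]; apply: H. Qed.

Lemma path_vertex a : is_vertex (x a a).
Proof. by rewrite /is_vertex path_kd ?nnle_refl ?nnsubnn. Qed.

Lemma path_off a b : ~~ nnle a b -> x a b = x a a.
Proof. by case: Px => _ [_ H]; apply: H. Qed.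

Lemma path_init_comp l m : ks l = kr m ->
  x nn0 (kd (kcomp l m)) = kcomp l m -> x nn0 (kd l) = l.
Proof.
move=> c; rewrite kd_comp // => E.
have le := nnle_addr (kd l) (kd m).
have c' : ks (x nn0 (kd l)) = kr (x (kd l) (nnadd (kd l) (kd m))).
  by rewrite path_ks ?nnle0 ?path_kr.
have d' : kd (x nn0 (kd l)) = kd l by rewrite path_kd ?nnle0 ?nnsub0.
by have [] := kcomp_inj c' c d' (etrans (esym (path_comp (nnle0 _) le)) E).
Qed.

End InfPath.

Lemma path_prefix_eq (x w : NN k -> NN k -> L) a N :
  is_inf_path x -> is_inf_path w -> nnle a N ->
  w nn0 N = x nn0 N -> w nn0 a = x nn0 a.
Proof.
move=> Px Pw aN wN.
have c : ks (x nn0 a) = kr (x a N) by rewrite path_ks ?nnle0 ?path_kr.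
have := path_init_comp Pw c.
rewrite -(path_comp Px (nnle0 a) aN) !path_kd ?nnle0 // !nnsub0.
by apply.
Qed.

Lemma open_path_set_init W (x : NN k -> NN k -> L) :
  is_open_path_set W -> is_inf_path x -> W x ->
  exists N, forall w, is_inf_path w -> w nn0 N = x nn0 N -> W w.
Proof.
move=> Wo Px Wx; have [ls [xls Wls]] := Wo x Px Wx.
have [N HN] := nnle_bound [seq kd lam | lam <- ls].
exists N => w Pw wN; apply: Wls => // lam lam_ls.
have dN : nnle (kd lam) N by apply: HN; apply: map_f.
by rewrite /in_cyl (path_prefix_eq Px Pw dN wN); apply: xls.
Qed.

Section ChainLimit.
Variables f h : nat -> L.
Hypotheses (fh : forall n, ks (f n) = kr (h n))
  (fS : forall n, f n.+1 = kcomp (f n) (h n))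
  (f_diag : forall n, nnle (nndiag k n) (kd (f n))).

Lemma chain_ext n d : exists t, ks (f n) = kr t /\ f (n + d) = kcomp (f n) t.
Proof.
elim: d => [|d [t [ct Et]]].
  by exists (ks (f n)); rewrite kr_ks addn0 kcomp_ks.
have ctt : ks t = kr (h (n + d)) by rewrite -fh Et ks_comp.
by exists (kcomp t (h (n + d))); rewrite kr_comp // addnS fS Et kcompA.
Qed.

Lemma chain_height b : nnle b (kd (f (nnheight b))).
Proof. exact: nnle_trans (nnle_diag_height b) (f_diag _). Qed.

(* The value off [nnle a b] is the normalisation required by [is_inf_path]. *)
Definition chain_limit (a b : NN k) : L :=
  if nnle a b then seg (f (nnheight b)) a b else seg (f (nnheight a)) a a.

Lemma chain_limitE n a b : nnle a b -> nnle b (kd (f n)) ->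
  chain_limit a b = seg (f n) a b.
Proof.
move=> ab bn; rewrite /chain_limit ab.
have [t [ct Et]] := chain_ext n (nnheight b - n).
have [t' [ct' Et']] := chain_ext (nnheight b) (n - nnheight b).
have e : n + (nnheight b - n) = nnheight b + (n - nnheight b) by lia.
by rewrite -(seg_compr ab bn ct) -Et e Et' seg_compr // chain_height.
Qed.

Lemma chain_limit_path : is_inf_path chain_limit.
Proof.
have lim_hb a b : nnle a b -> chain_limit a b = seg (f (nnheight b)) a b.
  by move=> ab; apply: chain_limitE; rewrite ?chain_height.
split; [|split].
- move=> a b ab; have bh := chain_height b; have ah := nnle_trans ab bh.
  rewrite lim_hb // seg_kd // seg_kr // seg_ks //.
  by rewrite (chain_limitE (nnle_refl a) ah) (chain_limitE (nnle_refl b) bh).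
- move=> a b c ab bc; have ch := chain_height c; have bh := nnle_trans bc ch.
  rewrite (lim_hb a c (nnle_trans ab bc)) (seg_comp ab bc ch).
  by rewrite (chain_limitE ab bh) (chain_limitE bc ch).
- by move=> a b /negbTE ab; rewrite /chain_limit ab nnle_refl.
Qed.

End ChainLimit.

Section Prepend.
Variables (mu : L) (z : NN k -> NN k -> L).
Hypotheses (Pz : is_inf_path z) (z0 : z nn0 nn0 = ks mu).

Lemma ks_prepend a : ks mu = kr (z nn0 a).
Proof. by rewrite (path_kr Pz) ?nnle0. Qed.

Lemma seg_prepend a b c : nnle a b -> nnle b c ->
  seg (kcomp mu (z nn0 c)) (nnadd a (kd mu)) (nnadd b (kd mu)) = z a b.
Proof.
move=> ab bc; have ca := ks_prepend a.
have zab : ks (z nn0 a) = kr (z a b) by rewrite (path_ks Pz) ?(path_kr Pz) ?nnle0.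
apply: segE; exists (kcomp mu (z nn0 a)), (z b c); split.
- by rewrite ks_comp.
- by rewrite (path_ks Pz) ?(path_kr Pz).
- by rewrite kd_comp // (path_kd Pz) ?nnle0 // nnsub0 nnaddC.
- by rewrite (path_kd Pz) ?nnsubDr.
rewrite (path_comp Pz (nnle0 a) (nnle_trans ab bc)) (path_comp Pz ab bc).
by rewrite kcompA // kr_comp // (path_ks Pz) ?(path_kr Pz).
Qed.

Lemma seg_prepend_init c : seg (kcomp mu (z nn0 c)) nn0 (kd mu) = mu.
Proof.
have cc := ks_prepend c.
apply: segE; exists (kr mu), (z nn0 c); split; rewrite ?ks_kr ?kd_kr ?nnsub0 //.
by rewrite -{1}(kr_comp cc) kcomp_kr.
Qed.

Lemma path_prepend :
  exists w, [/\ is_inf_path w, w nn0 (kd mu) = mu & shift (kd mu) w = z].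
Proof.
pose f n := kcomp mu (z nn0 (nndiag k n)).
pose h n := z (nndiag k n) (nndiag k n.+1).
have dS n : nnle (nndiag k n) (nndiag k n.+1) by apply: nnle_diag.
have zh n : ks (z nn0 (nndiag k n)) = kr (h n).
  by rewrite (path_ks Pz) ?nnle0 // (path_kr Pz).
have fh n : ks (f n) = kr (h n) by rewrite ks_comp; [apply: zh | apply: ks_prepend].
have fS n : f n.+1 = kcomp (f n) (h n).
  by rewrite /f (path_comp Pz (nnle0 _) (dS n)) kcompA; [|apply: ks_prepend | apply: zh].
have df n : kd (f n) = nnadd (kd mu) (nndiag k n).
  by rewrite kd_comp ?(path_kd Pz) ?nnle0 ?nnsub0 //; apply: ks_prepend.
have f_diag n : nnle (nndiag k n) (kd (f n)) by rewrite df nnle_addl.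
have Pw := chain_limit_path fh fS f_diag.
have wE a b : nnle a b -> chain_limit f (nnadd a (kd mu)) (nnadd b (kd mu)) = z a b.
  move=> ab; have bn := nnle_diag_height b.
  rewrite (chain_limitE fh fS f_diag (n := nnheight b)) ?nnle_add2r ?seg_prepend //.
  by rewrite df (nnaddC (kd mu)) nnle_add2r.
exists (chain_limit f); split => //.
  by rewrite (chain_limitE fh fS f_diag (n := 0)) ?nnle0 ?df ?nnle_addr ?seg_prepend_init.
apply: functional_extensionality => a; apply: functional_extensionality => b.
rewrite /shift; case ab: (nnle a b); first exact: wE.
by rewrite (path_off Pw) ?nnle_add2r ?ab // wE ?nnle_refl // (path_off Pz) ?ab.
Qed.

End Prepend.

Lemma path_from_vertex (v : L) : locally_finite_no_sources_sinks L -> is_vertex v ->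
  exists y, is_inf_path y /\ y nn0 nn0 = v.
Proof.
move=> LF vv.
pose g u := epsilon (inhabits u) (fun l => kr l = u /\ kd l = nndiag k 1).
have gP u : is_vertex u -> kr (g u) = u /\ kd (g u) = nndiag k 1.
  move=> uv; apply: (epsilon_spec (inhabits u) (fun l => kr l = u /\ kd l = nndiag k 1)).
  by have [_ [_ [[l [? ?]] _]]] := LF (nndiag k 1) u uv; exists l.
pose fix f n := if n is n'.+1 then kcomp (f n') (g (ks (f n'))) else v.
have fh n : ks (f n) = kr (g (ks (f n))) by rewrite (proj1 (gP _ (kd_ks _))).
have df n : kd (f n) = nndiag k n.
  elim: n => [|n IH] /=; first by rewrite vv; apply: nn_ext => i; rewrite !ffunE.
  by rewrite kd_comp // IH (proj2 (gP _ (kd_ks _))) nndiagS.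
have f_diag n : nnle (nndiag k n) (kd (f n)) by rewrite df nnle_refl.
exists (chain_limit f); split; first exact: chain_limit_path fh _ f_diag.
have [vr vs] := vertex_kr_ks vv.
have vvv : kcomp v v = v by rewrite -{2}vs kcomp_ks.
rewrite (chain_limitE fh _ f_diag (n := 0)) ?nnle0 //=.
by apply: segE; exists v, v; split; rewrite ?vr ?vs ?vvv ?nnsubnn.
Qed.

Lemma path_shift_aut phi p (x : NN k -> NN k -> L) :
  kg_aut phi -> is_inf_path x -> is_inf_path (shift p (alpha_inf phi x)).
Proof.
move=> [_ [phiP phi_comp]] Px; rewrite /shift /alpha_inf; split; [|split].
- move=> a b; rewrite -(nnle_add2r a b p) => ab.
  have [-> [-> ->]] := phiP (x (nnadd a p) (nnadd b p)).
  by rewrite path_kd // path_kr // path_ks // nnsubDr.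
- move=> a b c; rewrite -(nnle_add2r a b p) -(nnle_add2r b c p) => ab bc.
  by rewrite (path_comp Px ab bc) phi_comp // path_ks // path_kr.
- by move=> a b ab; rewrite (path_off Px) // nnle_add2r.
Qed.

End KGraph.

Section ZZ.
Variable l : nat.
Implicit Types m n : NN l.

Definition zzpos m : ZZ l := [ffun i => Posz (m i)].

Lemma zzneg0 : zzneg (@nn0 l) = zz0.
Proof. by apply/ffunP => i; rewrite !ffunE oppr0. Qed.

Lemma zznegD m n : zzneg (nnadd m n) = zzadd (zzneg m) (zzneg n).
Proof. by apply/ffunP => i; rewrite !ffunE PoszD opprD. Qed.

Lemma zzposK m : zzadd (zzpos m) (zzneg m) = zz0.
Proof. by apply/ffunP => i; rewrite !ffunE subrr. Qed.

Lemma zznegKpos m (z : ZZ l) : zzadd (zzneg m) (zzadd (zzpos m) z) = z.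
Proof. by apply/ffunP => i; rewrite !ffunE addrA addNr add0r. Qed.

End ZZ.

Section Action.
Variables (k l : nat) (L : kgraph k) (alpha : ZZ l -> L -> L).
Hypotheses (HK : is_kgraph L) (HA : is_aut_action alpha).
Implicit Types (m n : NN l) (v lam : L) (x y w : NN k -> NN k -> L).

Lemma alpha_aut z : kg_aut (alpha z).
Proof. by case: HA. Qed.

Lemma alpha_kr z lam : kr (alpha z lam) = alpha z (kr lam).
Proof. by have [_ [/(_ lam) [_ [-> _]] _]] := alpha_aut z. Qed.

Lemma alpha_ks z lam : ks (alpha z lam) = alpha z (ks lam).
Proof. by have [_ [/(_ lam) [_ [_ ->]] _]] := alpha_aut z. Qed.

Lemma alpha0 lam : alpha zz0 lam = lam.
Proof. by case: HA => _ []. Qed.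

Lemma alphaD z z' lam : alpha (zzadd z z') lam = alpha z (alpha z' lam).
Proof. by case: HA => _ [_ ->]. Qed.

Lemma alpha_posK m lam : alpha (zzpos m) (alpha (zzneg m) lam) = lam.
Proof. by rewrite -alphaD zzposK alpha0. Qed.

Lemma alpha_negD m n lam :
  alpha (zzneg (nnadd m n)) lam = alpha (zzneg m) (alpha (zzneg n) lam).
Proof. by rewrite zznegD alphaD. Qed.

(* [alpha_cofinal alpha] unfolds to: every vertex reaches every infinite path. *)
Definition reaches v y : Prop := exists p m n lam,
  kr lam = alpha (zzneg m) v /\ ks lam = alpha (zzneg n) (y p p).

Lemma reaches_open v : is_open_path_set (reaches v).
Proof.
move=> y Py [p [m [n [lam [r1 s1]]]]]; exists [:: y nn0 p].
have dy : kd (y nn0 p) = p by rewrite path_kd ?nnle0 ?nnsub0.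
split=> [_ /[!inE] /eqP -> | y' Py' /(_ _ (mem_head _ _))]; rewrite /in_cyl dy //.
move=> y'p; exists p, m, n, lam; split => //.
by rewrite s1 -(path_ks Py (nnle0 p)) -y'p path_ks ?nnle0.
Qed.

Lemma reaches_invariant v : is_invariant alpha (reaches v).
Proof.
move=> y y' Py Py' [p [m [n [lam [r1 s1]]]]] [q [q' [n1 [n2 E]]]].
have Ep : alpha (zzneg n1) (y (nnadd p q) (nnadd p q)) =
          alpha (zzneg n2) (y' (nnadd p q') (nnadd p q')) := congr1 (fun F => F p p) E.
have pq := nnle_addr p q.
set sg := alpha (zzneg n) (y p (nnadd p q)).
have csg : ks lam = kr sg by rewrite s1 alpha_kr path_kr.
exists (nnadd p q'), (nnadd n1 m), (nnadd n n2), (alpha (zzneg n1) (kcomp lam sg)).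
rewrite alpha_kr alpha_ks kr_comp // ks_comp // r1 alpha_ks path_ks //.
rewrite !alpha_negD; split => //.
by rewrite -alpha_negD (nnaddC n1) alpha_negD Ep.
Qed.

(* [w] is [x(0,N)], then [alpha_m lam], then [alpha_{m-n}] of the tail of [y]
   beyond [p]; shifting [w] past the first two pieces and applying [alpha_{-m}]
   gives [alpha_{-n}] of the tail of [y]. *)
Lemma reaches_traj_equiv x y N : is_inf_path x -> is_inf_path y ->
  reaches (x N N) y ->
  exists w, [/\ is_inf_path w, w nn0 N = x nn0 N & traj_equiv alpha w y].
Proof.
move=> Px Py [p [m [n [lam [r1 s1]]]]].
set Z := zzadd (zzpos m) (zzneg n); set mu := alpha (zzpos m) lam.
have rmu : kr mu = x N N by rewrite alpha_kr r1 alpha_posK.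
have smu : ks mu = alpha Z (y p p) by rewrite alpha_ks s1 alphaD.
have c : ks (x nn0 N) = kr mu by rewrite path_ks ?nnle0.
have Pz := path_shift_aut p (alpha_aut Z) Py.
have z0 : shift p (alpha_inf (alpha Z) y) nn0 nn0 = ks (kcomp (x nn0 N) mu).
  by rewrite /shift /alpha_inf nnadd0l ks_comp.
have [w [Pw w0 wz]] := path_prepend HK Pz z0.
exists w; split => //.
  by have := path_init_comp HK Pw c w0; rewrite path_kd ?nnle0 ?nnsub0.
exists (kd (kcomp (x nn0 N) mu)), p, m, n.
apply: functional_extensionality => a; apply: functional_extensionality => b.
have := congr1 (fun F => F a b) wz; rewrite /tau /shift /alpha_inf => ->.
by rewrite -alphaD zznegKpos.
Qed.

Lemma cofinal_irreducible : alpha_cofinal alpha -> tau_irreducible alpha.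
Proof.
move=> cof W Wo Wi.
have [[x [Px Wx]] | W0] := classic (exists x, is_inf_path x /\ W x); last first.
  by left => x Px Wx; apply: W0; exists x.
right => y Py; have [N WN] := open_path_set_init HK Wo Px Wx.
have [w [Pw wN wy]] := reaches_traj_equiv Px Py (cof _ _ (path_vertex Px N) Py).
exact: Wi w y Pw Py (WN w Pw wN) wy.
Qed.

Lemma irreducible_cofinal : locally_finite_no_sources_sinks L ->
  tau_irreducible alpha -> alpha_cofinal alpha.
Proof.
move=> LF irr v x vv Px.
have [W0 | Wall] := irr (reaches v) (@reaches_open v) (@reaches_invariant v); last exact: Wall.
have [y [Py y0]] := path_from_vertex HK LF vv.
have [vr vs] := vertex_kr_ks HK vv.
case: (W0 y Py); exists nn0, nn0, nn0, v.
by rewrite zzneg0 !alpha0 vr vs y0.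
Qed.

End Action.

Theorem lemma5p7 (k l : nat) (L : kgraph k) (alpha : ZZ l -> L -> L) :
  is_kgraph L -> locally_finite_no_sources_sinks L -> is_aut_action alpha ->
  (alpha_cofinal alpha <-> tau_irreducible alpha).
Proof.
move=> HK LF HA; split; first exact: cofinal_irreducible.
exact: irreducible_cofinal.
Qed.
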